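(* Let $F$ be a CNF formula over variables $x_1,\dots,x_n$ with clauses $C_1,\dots,C_m$ of two or three literals each. Let $R$ be the triple set and $H=(V,A)$ the hypergraph constructed from $F$ as described in the context. If $P\subseteq A$ is an acyclic path in $H$ from $\alpha\beta$ to $c_{m+1}\gamma$, then $\mathrm{triples}(P)$ entails $\alpha\beta|\gamma$; that is, every rooted binary tree displaying all triples of $\mathrm{triples}(P)$ also displays $\alpha\beta|\gamma$.
   Context: **Triples and trees.** A rooted triple $pq|o$, with $p,q,o$ distinct leaves and unordered in $p,q$, is displayed by a rooted binary tree $T$ (leaf set containing $p,q,o$) if the path from $p$ to $q$ is node-disjoint from the path from $o$ to the root. **Triples and arcs.** The triple $pq|o$ corresponds to the hyperarc $\mathrm{arc}(pq|o)=\{p,q\}\to\{\{p,o\},\{q,o\}\}$, and $\mathrm{triples}(P)$ is the set of triples corresponding to the arcs of $P$. We write $pq$ for the node $\{p,q\}$. **Hypergraph notions.** A hyperarc $u\to\{v,v'\}$ has tail $u$ and heads $\{v,v'\}$. A path from $u_0$ to $u_\ell$ is a sequence of distinct arcs $(a_1,\dots,a_\ell)$ with $\mathrm{t}(a_1)=u_0$, $u_\ell\in\mathrm{h}(a_\ell)$, and $\mathrm{t}(a_{k+1})\in\mathrm{h}(a_k)$ for all $k$. It is acyclic if no $a_k$ has a head equal to $\mathrm{t}(a_{k'})$ with $k'<k$. **Construction.** Use leaves - $x_i^j,\bar x_i^j,y_i^j,\bar y_i^j$ for $i\in[n]$, $j\in[m]$; - $b_i,b'_i$ for $i\in[n+1]$;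 - $c_j,d_j$ for $j\in[m]$; - $c_{m+1}$, and $\alpha,\beta,\gamma$. The triple set $R$ is the union of the following groups. (i) For each $i\in[n]$: - $b_ib'_i|x_i^1$ and $b'_ix_i^1|y_i^1$; - $x_i^jy_i^j|x_i^{j+1}$ and $y_i^jx_i^{j+1}|y_i^{j+1}$ for $1\le j\le m-1$; - $x_i^my_i^m|b_{i+1}$ and $y_i^mb_{i+1}|b'_{i+1}$. (ii) For each $i\in[n]$: - $b_ib'_i|\bar x_i^1$ and $b'_i\bar x_i^1|\bar y_i^1$; - $\bar x_i^j\bar y_i^j|\bar x_i^{j+1}$ and $\bar y_i^j\bar x_i^{j+1}|\bar y_i^{j+1}$ for $1\le j\le m-1$; - $\bar x_i^m\bar y_i^m|b_{i+1}$ and $\bar x_i^mb_{i+1}|b'_{i+1}$. (iii) For each clause $C_j$: - for each positive occurrence of $x_i$ in $C_j$, the triples $c_jd_j|x_i^j$, $c_jx_i^j|y_i^j$, $c_jy_i^j|c_{j+1}$; - for each negative occurrence of $x_i$ in $C_j$, the same triples with $\bar x_i^j,\bar y_i^j$ in place of $x_i^j,y_i^j$; - if $j<m$, the triple $c_jc_{j+1}|d_{j+1}$. (iv) Connecting triples: $\alpha\beta|b_1$, $\beta b_1|b'_1$, $b_{n+1}b'_{n+1}|c_1$, $b'_{n+1}c_1|d_1$, $c_mc_{m+1}|\gamma$. Then $A=\{\mathrm{arc}(t):t\in R\}$, and $V$ is the set of leaf pairs occurring in arcs of $A$. *)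

From HB Require Import structures.
From mathcomp Require Import all_boot.
From mathcomp Require Import finmap.

Set Implicit Arguments.
Unset Strict Implicit.
Unset Printing Implicit Defensive.

Local Open Scope fset_scope.

(* Leaves of the construction.  Indices are natural numbers; the       *)
(* construction only uses i in [1..n+1], j in [1..m+1].                 *)
Inductive leaf :=
  | X (i j : nat)
  | Xb (i j : nat)
  | Y (i j : nat)
  | Yb (i j : nat)
  | B (i : nat)
  | B' (i : nat)
  | C (j : nat)
  | D (j : nat)
  | Alpha | Beta | Gamma.

Definition leaf_code (l : leaf) : nat * (nat * nat) :=
  match l with
  | X i j => (0, (i, j)) | Xb i j => (1, (i, j)) | Y i j => (2, (i, j))
  | Yb i j => (3, (i, j)) | B i => (4, (i, 0)) | B' i => (5, (i, 0))
  | C j => (6, (j, 0)) | D j => (7, (j, 0))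
  | Alpha => (8, (0, 0)) | Beta => (9, (0, 0)) | Gamma => (10, (0, 0))
  end.

Definition leaf_decode (c : nat * (nat * nat)) : option leaf :=
  match c with
  | (0, (i, j)) => Some (X i j) | (1, (i, j)) => Some (Xb i j)
  | (2, (i, j)) => Some (Y i j) | (3, (i, j)) => Some (Yb i j)
  | (4, (i, _)) => Some (B i) | (5, (i, _)) => Some (B' i)
  | (6, (j, _)) => Some (C j) | (7, (j, _)) => Some (D j)
  | (8, _) => Some Alpha | (9, _) => Some Beta | (10, _) => Some Gamma
  | _ => None
  end.

Lemma leaf_codeK : pcancel leaf_code leaf_decode.
Proof. by case. Qed.

HB.instance Definition _ := Countable.copy leaf (pcan_type leaf_codeK).

Inductive tree := Lf (l : leaf) | Nd (tl tr : tree).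

Fixpoint tleaves (t : tree) : seq leaf :=
  match t with Lf l => [:: l] | Nd t1 t2 => tleaves t1 ++ tleaves t2 end.

Definition rbtree (t : tree) : bool := uniq (tleaves t).

(* Nodes of a tree are addressed by their path from the root
   (false = left child, true = right child).  [leaf_at t a x]: the node
   at address [a] is a leaf labelled [x]. *)
Fixpoint leaf_at (t : tree) (a : seq bool) (x : leaf) : bool :=
  match t, a with
  | Lf y, [::] => y == x
  | Nd t1 _, false :: a' => leaf_at t1 a' x
  | Nd _ t2, true :: a' => leaf_at t2 a' x
  | _, _ => false
  end.

(* Longest common prefix = address of the lowest common ancestor. *)
Fixpoint lcp (a b : seq bool) : seq bool :=
  match a, b with
  | x :: a', y :: b' => if x == y then x :: lcp a' b' else [::]
  | _, _ => [::]
  end.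

(* w lies on the (unique) tree path between nodes a and b:
   w is an ancestor-or-self of a or of b, and a descendant-or-self of
   their lowest common ancestor. *)
Definition on_path (a b w : seq bool) : bool :=
  (prefix w a || prefix w b) && prefix (lcp a b) w.

Definition on_root_path (a w : seq bool) : bool := prefix w a.

Definition displays (t : tree) (p q o : leaf) : Prop :=
  [/\ p != q, p != o, q != o &
   exists ap aq ao,
     [/\ leaf_at t ap p, leaf_at t aq q, leaf_at t ao o &
      forall w, on_path ap aq w -> ~~ on_root_path ao w]].

Definition hnode := {fset leaf}.
Definition harc : Type := (hnode * {fset hnode})%type.

Definition tail (a : harc) : hnode := a.1.
Definition heads (a : harc) : {fset hnode} := a.2.

Definition arc (p q o : leaf) : harc :=
  ([fset p; q], [fset [fset p; o]; [fset q; o]]).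

Definition arc0 : harc := (fset0, fset0).

Definition is_hpath (P : seq harc) (u v : hnode) : Prop :=
  [/\ P != [::], uniq P, tail (nth arc0 P 0) = u,
      v \in heads (nth arc0 P (size P).-1) &
      forall k, k.+1 < size P ->
        tail (nth arc0 P k.+1) \in heads (nth arc0 P k)].

Definition acyclic_hpath (P : seq harc) : Prop :=
  forall k k', k' < k -> k < size P ->
    tail (nth arc0 P k') \notin heads (nth arc0 P k).

Definition entails (P : seq harc) (p q o : leaf) : Prop :=
  forall t : tree, rbtree t ->
    (forall p' q' o', [/\ p' != q', p' != o' & q' != o'] ->
       arc p' q' o' \in P -> displays t p' q' o') ->
    displays t p q o.

(* CNF formulas: a literal is (variable index, polarity) with         *)
(* polarity true = positive; clause C_j = nth [::] cls (j-1).           *)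
Definition literal := (nat * bool)%type.
Definition clause := seq literal.

Definition cnf_ok (n : nat) (cls : seq clause) : Prop :=
  forall c, c \in cls ->
    ((size c == 2) || (size c == 3)) /\
    (forall l, l \in c -> 1 <= l.1 <= n).

Definition clause_at (cls : seq clause) (j : nat) : clause := nth [::] cls j.-1.

Definition inR (n : nat) (cls : seq clause) (p q o : leaf) : Prop :=
  let m := size cls in
  let t := (p, q, o) in
  (exists i, 1 <= i <= n /\
     (t = (B i, B' i, X i 1) \/ t = (B' i, X i 1, Y i 1) \/
      (exists j, 1 <= j <= m - 1 /\
         (t = (X i j, Y i j, X i j.+1) \/ t = (Y i j, X i j.+1, Y i j.+1))) \/
      t = (X i m, Y i m, B i.+1) \/
      t = (Y i m, B i.+1, B' i.+1)))
  \/
  (exists i, 1 <= i <= n /\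
     (t = (B i, B' i, Xb i 1) \/ t = (B' i, Xb i 1, Yb i 1) \/
      (exists j, 1 <= j <= m - 1 /\
         (t = (Xb i j, Yb i j, Xb i j.+1) \/ t = (Yb i j, Xb i j.+1, Yb i j.+1))) \/
      t = (Xb i m, Yb i m, B i.+1) \/
      t = (Xb i m, B i.+1, B' i.+1)))
  \/
  (exists j, 1 <= j <= m /\
     ((exists i, (i, true) \in clause_at cls j /\
        [\/ t = (C j, D j, X i j), t = (C j, X i j, Y i j) | t = (C j, Y i j, C j.+1)])
      \/ (exists i, (i, false) \in clause_at cls j /\
        [\/ t = (C j, D j, Xb i j), t = (C j, Xb i j, Yb i j) | t = (C j, Yb i j, C j.+1)])
      \/ (j < m /\ t = (C j, C j.+1, D j.+1))))
  \/
  (t = (Alpha, Beta, B 1) \/ t = (Beta, B 1, B' 1) \/ t = (B n.+1, B' n.+1, C 1) \/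
   t = (B' n.+1, C 1, D 1) \/ t = (C m, C m.+1, Gamma)).

Definition inA (n : nat) (cls : seq clause) (a : harc) : Prop :=
  exists p q o, inR n cls p q o /\ a = arc p q o.

(* Fix a tree displaying triples(P) and say that a node u of the hypergraph
   covers alpha and beta if every subtree containing all leaves of u also
   contains alpha and beta, i.e. lca(u) is an ancestor of both.  The start
   node alpha beta covers them, and covering propagates along every arc pq|o:
   if the tree displays pq|o then lca(p,o) and lca(q,o) are ancestors of
   lca(p,q).  The last arc of the path is pq|gamma with {p,q} covering alpha
   and beta; as gamma lies outside the subtree of lca(p,q), which contains
   alpha and beta, the tree displays alpha beta|gamma. *)
From Pilot Require Import Defs.
From HB Require Import structures.
From mathcomp Require Import all_boot.
From mathcomp Require Import finmap.
From Stdlib Require Import Lia.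

Set Implicit Arguments.
Unset Strict Implicit.
Unset Printing Implicit Defensive.

Local Open Scope fset_scope.

Lemma prefix_total (a b c : seq bool) :
  prefix a c -> prefix b c -> prefix a b || prefix b a.
Proof.
elim: c a b => [|x c IH] [|y a] [|z b] //=.
by move=> /andP[/eqP -> Ha] /andP[/eqP -> Hb]; rewrite eqxx /=; exact: IH.
Qed.

Lemma lcpC (a b : seq bool) : lcp a b = lcp b a.
Proof.
elim: a b => [|x a IH] [|y b] //=; rewrite eq_sym.
by case: eqP => [->|//]; rewrite IH.
Qed.

Lemma prefix_lcpl (a b : seq bool) : prefix (lcp a b) a.
Proof.
elim: a b => [|x a IH] [|y b] //=.
by case: eqP => //= _; rewrite eqxx; apply: IH.
Qed.

Lemma prefix_lcpr (a b : seq bool) : prefix (lcp a b) b.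
Proof. by rewrite lcpC prefix_lcpl. Qed.

Lemma prefix_lcp (z a b : seq bool) : prefix z a -> prefix z b -> prefix z (lcp a b).
Proof.
elim: a b z => [|x a IH] [|y b] [|w z] //=; first by rewrite prefix0s.
by move=> /andP[/eqP <- Ha] /andP[/eqP <- Hb]; rewrite !eqxx /= eqxx; exact: IH.
Qed.

Lemma prefix_lcp_outside (a b c : seq bool) :
  ~~ prefix (lcp a b) c -> prefix (lcp a c) (lcp a b).
Proof.
move=> out; case/orP: (prefix_total (prefix_lcpl a b) (prefix_lcpl a c)) => // abc.
by rewrite (prefix_trans abc (prefix_lcpr a c)) in out.
Qed.

Lemma leaf_at_tleaves t a x : leaf_at t a x -> x \in tleaves t.
Proof.
elim: t a => [l|t1 IH1 t2 IH2] [|[] a] //=.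
- by move/eqP->; rewrite inE.
- by move/IH2; rewrite mem_cat orbC => ->.
- by move/IH1; rewrite mem_cat => ->.
Qed.

Lemma leaf_at_inj t a b x : rbtree t -> leaf_at t a x -> leaf_at t b x -> a = b.
Proof.
rewrite /rbtree; elim: t a b => [l|t1 IH1 t2 IH2] [|[] a] [|[] b] //=;
  rewrite ?cat_uniq => /and3P[u1 disj u2] Ha Hb.
- by rewrite (IH2 _ _ u2 Ha Hb).
- by case/hasP: disj; exists x; apply: leaf_at_tleaves; eassumption.
- by case/hasP: disj; exists x; apply: leaf_at_tleaves; eassumption.
- by rewrite (IH1 _ _ u1 Ha Hb).
Qed.

Lemma displays_lcp t p q o :
  displays t p q o <->
  [/\ p != q, p != o, q != o &
   exists ap aq ao, [/\ leaf_at t ap p, leaf_at t aq q, leaf_at t ao o &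
                        ~~ prefix (lcp ap aq) ao]].
Proof.
split=> -[pq po qo [ap [aq [ao [Hp Hq Ho sep]]]]]; split=> //; exists ap, aq, ao.
  split=> //; apply: sep; by rewrite /on_path prefix_lcpl prefix_refl.
split=> // w /andP[_ lcp_w]; apply: contra sep; exact: prefix_trans.
Qed.

Section Clusters.

Variable t : tree.
Hypothesis t_rb : rbtree t.
Variables a b : leaf.

Definition in_subtree (z : seq bool) (x : leaf) : Prop :=
  exists2 ax, leaf_at t ax x & prefix z ax.

Definition lca_covers (u : hnode) : Prop :=
  forall z, {in u, forall x, in_subtree z x} -> in_subtree z a /\ in_subtree z b.

Lemma lca_covers_self : lca_covers [fset a; b].
Proof. by move=> z cov; split; apply: cov; rewrite !inE eqxx ?orbT. Qed.

Lemma in_subtreeE z x ax : leaf_at t ax x -> in_subtree z x <-> prefix z ax.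
Proof.
move=> Hx; split=> [[ax' Hx' zax']|zax]; last by exists ax.
by rewrite (leaf_at_inj t_rb Hx Hx').
Qed.

Lemma in_subtree_prefix z z' x : prefix z z' -> in_subtree z' x -> in_subtree z x.
Proof. by move=> zz' [ax Hx z'ax]; exists ax; rewrite // (prefix_trans zz'). Qed.

Lemma lca_covers_pair p q ap aq : leaf_at t ap p -> leaf_at t aq q ->
  lca_covers [fset p; q] <-> in_subtree (lcp ap aq) a /\ in_subtree (lcp ap aq) b.
Proof.
move=> Hp Hq; split=> [cov | [lcp_a lcp_b] z sub].
  apply: cov => x; rewrite !inE => /orP[]/eqP->.
  - by exists ap; rewrite ?prefix_lcpl.
  - by exists aq; rewrite ?prefix_lcpr.
have z_lcp : prefix z (lcp ap aq).
  apply: prefix_lcp; [rewrite -(in_subtreeE _ Hp) | rewrite -(in_subtreeE _ Hq)];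
    by apply: sub; rewrite !inE eqxx ?orbT.
by split; apply: in_subtree_prefix z_lcp _.
Qed.

Lemma lca_covers_step p q o : displays t p q o -> lca_covers [fset p; q] ->
  lca_covers [fset p; o] /\ lca_covers [fset q; o].
Proof.
case/displays_lcp=> _ _ _ [ap [aq [ao [Hp Hq Ho out]]]].
rewrite (lca_covers_pair Hp Hq) (lca_covers_pair Hp Ho) (lca_covers_pair Hq Ho).
have po := prefix_lcp_outside out.
have qo : prefix (lcp aq ao) (lcp ap aq).
  by rewrite [lcp ap aq]lcpC; apply: prefix_lcp_outside; rewrite lcpC.
by move=> [Ha Hb]; split; split; apply: in_subtree_prefix; eassumption.
Qed.

Lemma lca_covers_displays p q o : a != b -> displays t p q o ->
  lca_covers [fset p; q] -> displays t a b o.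
Proof.
move=> a_neq_b; case/displays_lcp=> _ _ _ [ap [aq [ao [Hp Hq Ho out]]]].
case/(lca_covers_pair Hp Hq) => -[aa Ha lcp_a] [ab Hb lcp_b].
have out_ab : ~~ prefix (lcp aa ab) ao.
  by apply: contra out; apply: prefix_trans; apply: prefix_lcp.
have not_o x ax : leaf_at t ax x -> prefix (lcp aa ab) ax -> x != o.
  move=> Hx lcp_x; apply: contraNneq out_ab => xo; move: Hx; rewrite xo => Hx.
  by rewrite -(leaf_at_inj t_rb Hx Ho).
apply/displays_lcp; split=> //; last by exists aa, ab, ao.
- by apply: (not_o _ _ Ha); rewrite prefix_lcpl.
- by apply: (not_o _ _ Hb); rewrite prefix_lcpr.
Qed.

End Clusters.

Lemma hpath_tails_inv (I : hnode -> Prop) P u v : is_hpath P u v -> I u ->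
  {in P, forall e, I (tail e) -> forall h, h \in heads e -> I h} ->
  forall k, k < size P -> I (tail (nth arc0 P k)).
Proof.
case=> _ _ P_start _ P_link Iu I_arcs; elim=> [|k IH] k_lt; first by rewrite P_start.
apply: I_arcs (P_link k k_lt); first exact/mem_nth/ltnW.
exact/IH/ltnW.
Qed.

Lemma inR_neq n cls p q o : inR n cls p q o ->
  [/\ p != q, p != o, q != o, p != Gamma & q != Gamma].
Proof.
rewrite /inR /= => H.
decompose [or and ex or3] H; clear H;
repeat match goal with E : (_, _, _) = (_, _, _) |- _ =>
  injection E as E1 E2 E3; subst end;
split; apply/eqP => E; (discriminate || (injection E; lia)).
Qed.

Lemma arc_head_gamma (p q o c : leaf) : p != Gamma -> q != Gamma ->
  [fset c; Gamma] \in heads (Defs.arc p q o) -> o = Gamma.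
Proof.
move=> pG qG; rewrite !inE => /orP[]/eqP E.
- have : Gamma \in [fset p; o] by rewrite -E !inE eqxx orbT.
  by rewrite !inE eq_sym (negbTE pG) => /eqP.
- have : Gamma \in [fset q; o] by rewrite -E !inE eqxx orbT.
  by rewrite !inE eq_sym (negbTE qG) => /eqP.
Qed.

Theorem lemma3 (n : nat) (cls : seq clause) (P : seq harc) :
  cnf_ok n cls -> 0 < size cls ->
  (forall a, a \in P -> inA n cls a) ->
  is_hpath P [fset Alpha; Beta] [fset C (size cls).+1; Gamma] ->
  acyclic_hpath P ->
  entails P Alpha Beta Gamma.
Proof.
move=> _ _ P_A P_path _ t t_rb P_displayed.
have P_arcs : {in P, forall e, exists p q o,
    [/\ e = Defs.arc p q o, inR n cls p q o & displays t p q o]}.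
  move=> e eP; have [p [q [o [pqo E]]]] := P_A e eP.
  exists p, q, o; split=> //; case: (inR_neq pqo) => pq po qo _ _.
  by apply: P_displayed; rewrite -?E.
have cov_tails := hpath_tails_inv (I := lca_covers t Alpha Beta) P_path.
case: P_path => P_nil _ _ P_end _.
have last_lt : (size P).-1 < size P by rewrite prednK // lt0n size_eq0.
have [p [q [o [E pqo D]]]] := P_arcs _ (mem_nth arc0 last_lt).
have [_ _ _ pG qG] := inR_neq pqo.
have oG : o = Gamma by apply: (arc_head_gamma pG qG); rewrite -E; exact: P_end.
rewrite oG in D; apply: (lca_covers_displays t_rb _ D) => //.
have := cov_tails _ _ _ last_lt; rewrite E; apply.
- exact: lca_covers_self.
- move=> e /P_arcs [p' [q' [o' [-> _ D']]]] cov h.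
  have [cov_po cov_qo] := lca_covers_step t_rb D' cov.
  by rewrite !inE => /orP[]/eqP->.
Qed.
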